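(* Let $\alpha>0$ and let $n$ be a positive integer with $\alpha n>1$. Let $q\in\mathbb{C}$ satisfy $0<|q|\leq 1-1/(\alpha n)$ and let $z\in\mathbb{C}$ satisfy $|z|=|q|^{-n-1/2}$. Then $U:=\prod_{m=1}^{\infty}(1+zq^m)$ satisfies $$|U|\geq |q|^{-n^2/2}e^{-(\pi^2/3)(\alpha n(\alpha n-1))^{1/2}}.$$ *)

From Stdlib Require Import Reals.
From Coquelicot Require Import Coquelicot.
Open Scope R_scope.

Fixpoint cpow (q : C) (m : nat) : C :=
  match m with
  | O => 1%C
  | S k => Cmult q (cpow q k)
  end.

Fixpoint partial_prod (z q : C) (N : nat) : C :=
  match N with
  | O => 1%C
  | S k => Cmult (partial_prod z q k) (Cplus 1%C (Cmult z (cpow q (S k))))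
  end.

Definition is_inf_prod (z q U : C) : Prop :=
  filterlim (partial_prod z q) eventually (locally U).

(* With s = |q|^(1/2) one has |z q^m| = s^(2m-2n-1), so by the reverse triangle inequality
   the first n factors of the product satisfy |1 + z q^m| >= s^-(2k+1) (1 - s^(2k+1)), k = n - m,
   and the later ones |1 + z q^(n+1+j)| >= 1 - s^(2j+1).  Hence every partial product of length
   n + K is at least s^(-n^2) (s;s^2)_n (s;s^2)_K.  Expanding the logarithm,
     -log (s;s^2)_K <= sum_j (1/j) s^j / (1 - s^(2j)) <= s / (1 - s^2) * sum_j 1/j^2,
   because s^-j - s^j >= j (s^-1 - s); and sum_j 1/j^2 <= pi^2/6 follows from Matsuoka's
   telescoping identity 1/(n+1)^2 = 2 J_n/I_n - 2 J_(n+1)/I_(n+1) for the integrals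
   I_n, J_n of cos^(2n) x and x^2 cos^(2n) x over [0, pi/2].  Finally s / (1 - s^2) <=
   (alpha n (alpha n - 1))^(1/2) as soon as s^2 <= 1 - 1/(alpha n). *)

From Stdlib Require Import Reals Lra Lia.
From Coquelicot Require Import Coquelicot.
Open Scope R_scope.

Lemma sin_sq x : sin x ^ 2 = 1 - cos x ^ 2.
Proof. rewrite <- (sin2_cos2 x); unfold Rsqr; ring. Qed.

Lemma is_derive_sin_cos_pow k x :
  is_derive (fun x => sin x * cos x ^ S k) x
    (INR (S (S k)) * cos x ^ S (S k) - INR (S k) * cos x ^ k).
Proof.
  auto_derive; auto.
  change (match k with 0%nat => 1 | S _ => INR k + 1 end) with (INR (S k)).
  rewrite !S_INR. ring_simplify. rewrite sin_sq. simpl. ring.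
Qed.

Lemma is_derive_sq_sin_cos_pow k x :
  is_derive (fun x => INR (S (S k)) / 2 * x ^ 2 * sin x * cos x ^ S k + x * cos x ^ S (S k)) x
    (INR (S (S k)) / 2 * x ^ 2 * (INR (S (S k)) * cos x ^ S (S k) - INR (S k) * cos x ^ k)
     + cos x ^ S (S k)).
Proof.
  auto_derive; auto.
  change (match k with 0%nat => 1 | S _ => INR k + 1 end) with (INR (S k)).
  change (match S k with 0%nat => 1 | S _ => INR (S k) + 1 end) with (INR (S (S k))).
  rewrite !S_INR. ring_simplify. rewrite sin_sq. simpl. field.
Qed.

Lemma continuous_cos_pow k x : continuous (fun x => cos x ^ k) x.
Proof. apply (ex_derive_continuous (V := R_NormedModule)); auto_derive; auto. Qed.

Lemma continuous_sq_cos_pow k x : continuous (fun x => x ^ 2 * cos x ^ k) x.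
Proof. apply (ex_derive_continuous (V := R_NormedModule)); auto_derive; auto. Qed.

Lemma RInt_derive_eq_0 (F f : R -> R) a b :
  (forall x, is_derive F x (f x)) -> (forall x, continuous f x) -> F a = F b ->
  RInt f a b = 0.
Proof.
  intros dF cf Fab.
  rewrite (is_RInt_unique f a b (minus (F b) (F a))).
  - rewrite Fab. unfold minus, plus, opp; simpl; ring.
  - apply (is_RInt_derive F f); auto.
Qed.

Lemma RInt_scal_minus (g h : R -> R) a b c d :
  (forall x, continuous g x) -> (forall x, continuous h x) ->
  RInt (fun x => c * g x - d * h x) a b = c * RInt g a b - d * RInt h a b.
Proof.
  intros cg ch.
  assert (ig : ex_RInt g a b) by (apply (ex_RInt_continuous (V := R_CompleteNormedModule)); auto).
  assert (ih : ex_RInt h a b) by (apply (ex_RInt_continuous (V := R_CompleteNormedModule)); auto).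
  rewrite (RInt_minus (fun x => c * g x) (fun x => d * h x)).
  - rewrite (RInt_scal g), (RInt_scal h); auto.
  - apply (ex_RInt_scal g); auto.
  - apply (ex_RInt_scal h); auto.
Qed.

Definition wallis_I (n : nat) : R := RInt (fun x => cos x ^ (2 * n)) 0 (PI / 2).
Definition wallis_J (n : nat) : R := RInt (fun x => x ^ 2 * cos x ^ (2 * n)) 0 (PI / 2).

Lemma wallis_I_succ n : (2 * INR n + 2) * wallis_I (S n) = (2 * INR n + 1) * wallis_I n.
Proof.
  assert (h : RInt (fun x => INR (S (S (2 * n))) * cos x ^ S (S (2 * n))
                             - INR (S (2 * n)) * cos x ^ (2 * n)) 0 (PI / 2) = 0).
  { apply (RInt_derive_eq_0 (fun x => sin x * cos x ^ S (2 * n))).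
    - apply is_derive_sin_cos_pow.
    - intros. apply (ex_derive_continuous (V := R_NormedModule)); auto_derive; auto.
    - rewrite sin_0, cos_PI2. simpl. ring. }
  rewrite RInt_scal_minus in h by apply continuous_cos_pow.
  unfold wallis_I. replace (2 * S n)%nat with (S (S (2 * n))) by lia.
  rewrite !S_INR, mult_INR in h. simpl INR in h. lra.
Qed.

Lemma wallis_J_succ n :
  wallis_I (S n) + 2 * (INR n + 1) ^ 2 * wallis_J (S n)
  = (INR n + 1) * (2 * INR n + 1) * wallis_J n.
Proof.
  assert (h : RInt (fun x => (INR n + 1) * (2 * INR n + 2) * (x ^ 2 * cos x ^ S (S (2 * n)))
                             - (INR n + 1) * (2 * INR n + 1) * (x ^ 2 * cos x ^ (2 * n))
                             + cos x ^ S (S (2 * n))) 0 (PI / 2) = 0).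
  { transitivity (RInt (fun x => INR (S (S (2 * n))) / 2 * x ^ 2 *
        (INR (S (S (2 * n))) * cos x ^ S (S (2 * n)) - INR (S (2 * n)) * cos x ^ (2 * n))
        + cos x ^ S (S (2 * n))) 0 (PI / 2)).
    - apply (RInt_ext (V := R_CompleteNormedModule)). intros. rewrite !S_INR, mult_INR. simpl. field.
    - apply (RInt_derive_eq_0 _ _ 0 (PI / 2) (is_derive_sq_sin_cos_pow (2 * n))).
      + intros. apply (ex_derive_continuous (V := R_NormedModule)); auto_derive; auto.
      + rewrite sin_0, cos_PI2. simpl. ring. }
  rewrite (RInt_plus (V := R_CompleteNormedModule) (fun x => _ - _)) in h
    by (apply (ex_RInt_continuous (V := R_CompleteNormedModule)); intros;
        apply (ex_derive_continuous (V := R_NormedModule)); auto_derive; auto).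
  rewrite RInt_scal_minus in h by apply continuous_sq_cos_pow.
  unfold wallis_I, wallis_J. replace (2 * S n)%nat with (S (S (2 * n))) by lia.
  change (plus ?a ?b) with (a + b) in h. lra.
Qed.

Lemma wallis_I_0 : wallis_I 0 = PI / 2.
Proof.
  unfold wallis_I. simpl. rewrite RInt_const. unfold scal; simpl; unfold mult; simpl. ring.
Qed.

Lemma wallis_J_0 : wallis_J 0 = (PI / 2) ^ 3 / 3.
Proof.
  unfold wallis_J.
  rewrite (is_RInt_unique _ 0 (PI / 2) (minus ((PI / 2) ^ 3 / 3) (0 ^ 3 / 3))).
  - unfold minus, plus, opp; simpl. field.
  - apply (is_RInt_derive (fun x => x ^ 3 / 3)).
    + intros. auto_derive; auto. simpl. field.
    + intros. apply continuous_sq_cos_pow.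
Qed.

Lemma wallis_I_pos n : 0 < wallis_I n.
Proof.
  induction n as [|n IHn].
  - rewrite wallis_I_0. pose proof PI_RGT_0. lra.
  - pose proof (wallis_I_succ n). pose proof (pos_INR n). nra.
Qed.

Lemma wallis_J_ge0 n : 0 <= wallis_J n.
Proof.
  apply RInt_ge_0.
  - pose proof PI_RGT_0. lra.
  - apply (ex_RInt_continuous (V := R_CompleteNormedModule)). intros. apply continuous_sq_cos_pow.
  - intros x _. rewrite pow_mult. apply Rmult_le_pos; [apply pow2_ge_0 | apply pow_le, pow2_ge_0].
Qed.

Lemma inv_sq_wallis n :
  / INR (S n) ^ 2 = 2 * (wallis_J n / wallis_I n) - 2 * (wallis_J (S n) / wallis_I (S n)).
Proof.
  pose proof (wallis_I_succ n). pose proof (wallis_J_succ n).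
  pose proof (wallis_I_pos n). pose proof (wallis_I_pos (S n)). pose proof (pos_INR n).
  assert (I_eq : wallis_I n = (2 * INR n + 2) * wallis_I (S n) / (2 * INR n + 1)) by (field_simplify_eq; lra).
  assert (J_eq : wallis_J n = (wallis_I (S n) + 2 * (INR n + 1) ^ 2 * wallis_J (S n))
                              / ((INR n + 1) * (2 * INR n + 1))) by (field_simplify_eq; lra).
  rewrite I_eq, J_eq, S_INR. field. lra.
Qed.

Lemma sum_inv_sq_le N : sum_n (fun j => / INR (S j) ^ 2) N <= PI ^ 2 / 6.
Proof.
  assert (telescope : sum_n (fun j => / INR (S j) ^ 2) N
                      = 2 * (wallis_J 0 / wallis_I 0) - 2 * (wallis_J (S N) / wallis_I (S N))).
  { induction N as [|N IHN].
    - rewrite sum_O. apply inv_sq_wallis.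
    - rewrite sum_Sn, IHN, (inv_sq_wallis (S N)). unfold plus; simpl. ring. }
  rewrite telescope, wallis_I_0, wallis_J_0.
  assert (0 <= wallis_J (S N) / wallis_I (S N))
    by (apply Rdiv_le_0_compat; [apply wallis_J_ge0 | apply wallis_I_pos]).
  pose proof PI_RGT_0.
  replace (2 * ((PI / 2) ^ 3 / 3 / (PI / 2))) with (PI ^ 2 / 6) by (field; lra). lra.
Qed.

Definition log_series (J : nat) (x : R) : R := sum_n (fun j => x ^ S j / INR (S j)) J.

Lemma is_derive_log_series J x : is_derive (log_series J) x (sum_n (fun j => x ^ j) J).
Proof.
  apply (is_derive_sum_n (fun j y => y ^ S j / INR (S j))).
  intros j _. auto_derive; auto.
  change (match j with 0%nat => 1 | S _ => INR j + 1 end) with (INR (S j)).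
  field. apply not_0_INR; lia.
Qed.

Lemma log_series_0 J : log_series J 0 = 0.
Proof.
  unfold log_series. rewrite (sum_n_ext _ (fun _ => 0)), sum_n_const; [ring|].
  intros j. simpl. unfold Rdiv. ring.
Qed.

Lemma sum_n_geom x J : x <> 1 -> sum_n (fun j => x ^ j) J = (1 - x ^ S J) / (1 - x).
Proof. intros. rewrite sum_n_Reals. apply tech3; auto. Qed.

Lemma is_derive_pow_div_one_minus m y : (0 < m)%nat -> y < 1 ->
  is_derive (fun y => y ^ m / (INR m * (1 - y))) y
    (y ^ pred m / (1 - y) + y ^ m / (INR m * (1 - y) ^ 2)).
Proof.
  intros m_gt0 y_lt1. assert (0 < INR m) by (apply lt_0_INR; lia).
  auto_derive; [apply Rmult_integral_contrapositive_currified; lra|]. field. lra.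
Qed.

Lemma neg_ln_one_minus_le J x : 0 <= x < 1 ->
  - ln (1 - x) <= log_series J x + x ^ S (S J) / (INR (S (S J)) * (1 - x)).
Proof.
  intros [x_ge0 x_lt1].
  set (g y := ln (1 - y) + log_series J y + y ^ S (S J) / (INR (S (S J)) * (1 - y))).
  set (dg y := y ^ S (S J) / (INR (S (S J)) * (1 - y) ^ 2)).
  assert (SJ_gt0 : 0 < INR (S (S J))) by (apply lt_0_INR; lia).
  assert (dg_ok : forall y, y < 1 -> is_derive g y (dg y)).
  { intros y y_lt1.
    replace (dg y) with (- / (1 - y) + sum_n (fun j => y ^ j) J
      + (y ^ S J / (1 - y) + y ^ S (S J) / (INR (S (S J)) * (1 - y) ^ 2))).
    - apply (is_derive_plus (fun y => ln (1 - y) + log_series J y)).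
      + apply (is_derive_plus (fun y => ln (1 - y)) (log_series J)); [auto_derive; [lra | field; lra] | apply is_derive_log_series].
      + apply (is_derive_pow_div_one_minus (S (S J))); [lia | exact y_lt1].
    - unfold dg. rewrite sum_n_geom by lra. field. lra. }
  destruct (MVT_gen g 0 x dg) as [c [[c_ge0 c_le] g_diff]].
  - intros y. rewrite Rmin_left, Rmax_right by lra. intros. apply dg_ok. lra.
  - intros y. rewrite Rmin_left, Rmax_right by lra. intros. apply continuity_pt_filterlim.
    apply (ex_derive_continuous (V := R_NormedModule)). exists (dg y). apply dg_ok. lra.
  - rewrite Rmin_left in c_ge0 by lra. rewrite Rmax_right in c_le by lra.
    assert (g 0 = 0) by (unfold g; rewrite log_series_0, Rminus_0_r, ln_1, pow_i by lia; unfold Rdiv; ring).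
    assert (0 <= dg c).
    { unfold dg. apply Rdiv_le_0_compat; [apply pow_le; lra|].
      apply Rmult_lt_0_compat; [lra | apply pow_lt; lra]. }
    unfold g in *. nra.
Qed.

Lemma inv_pow_sub_pow_ge s m : 0 < s <= 1 -> INR m * (/ s - s) <= / s ^ m - s ^ m.
Proof.
  intros s_bounds. induction m as [|m IHm]; [simpl; lra|].
  assert (0 < s ^ m <= 1) by (split; [apply pow_lt | rewrite <- (pow1 m); apply pow_incr]; lra).
  assert (E : / s ^ S m - s ^ S m = (/ s ^ m - s ^ m) + (/ s - s)
            + (1 - s ^ m) * (1 - s) * (1 - s ^ m * s) / (s ^ m * s)).
  { simpl. field. lra. }
  assert (0 <= (1 - s ^ m) * (1 - s) * (1 - s ^ m * s) / (s ^ m * s)).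
  { apply Rdiv_le_0_compat; [|nra]. apply Rmult_le_pos; [apply Rmult_le_pos|]; nra. }
  rewrite E, S_INR. lra.
Qed.

Lemma odd_pow_sum_le s m M : 0 < s < 1 -> (0 < m)%nat ->
  sum_n (fun k => (s ^ (2 * k + 1)) ^ m) M <= s / (INR m * (1 - s ^ 2)).
Proof.
  intros s_bounds m_gt0.
  assert (sm_pos : 0 < s ^ m) by (apply pow_lt; lra).
  assert (s2m_bounds : 0 <= s ^ (2 * m) < 1) by (apply pow_lt_1_compat; [lra | lia]).
  assert (m_pos : 0 < INR m) by (apply lt_0_INR; lia).
  rewrite (sum_n_ext _ (fun k => s ^ m * (s ^ (2 * m)) ^ k)).
  2: { intros k. rewrite <- !pow_mult, <- pow_add. f_equal. lia. }
  rewrite (sum_n_mult_l (s ^ m) (fun k => (s ^ (2 * m)) ^ k)), sum_n_geom by lra.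
  apply Rle_trans with (s ^ m / (1 - s ^ (2 * m))).
  - change (mult ?a ?b) with (a * b). unfold Rdiv. apply Rmult_le_compat_l; [lra|].
    assert (0 < / (1 - s ^ (2 * m))) by (apply Rinv_0_lt_compat; lra).
    assert (0 <= (s ^ (2 * m)) ^ S M) by (apply pow_le; lra). nra.
  - replace (s ^ m / (1 - s ^ (2 * m))) with (/ (/ s ^ m - s ^ m)).
    2: { rewrite Nat.mul_comm, pow_mult in *. field. split; nra. }
    replace (s / (INR m * (1 - s ^ 2))) with (/ (INR m * (/ s - s))) by (field; nra).
    apply Rinv_le_contravar; [|apply inv_pow_sub_pow_ge; lra].
    apply Rmult_lt_0_compat; [lra|].
    replace (/ s - s) with ((1 - s ^ 2) / s) by (field; lra). apply Rdiv_lt_0_compat; nra.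
Qed.

Lemma le_of_le_add_geom a b c s : 0 <= s < 1 -> (forall J, a <= b + c * s ^ J) -> a <= b.
Proof.
  intros s_bounds le_abc.
  assert (lim : is_lim_seq (fun J => b + c * s ^ J) (b + c * 0)).
  { apply is_lim_seq_plus'; [apply is_lim_seq_const|].
    apply (is_lim_seq_scal_l _ c 0), is_lim_seq_geom. rewrite Rabs_pos_eq; lra. }
  pose proof (is_lim_seq_le _ _ _ _ le_abc (is_lim_seq_const a) lim) as H. simpl in H. lra.
Qed.

Lemma sum_log_series_odd_pow_le s M J : 0 < s < 1 ->
  sum_n (fun k => log_series J (s ^ (2 * k + 1))) M <= PI ^ 2 / 6 * (s / (1 - s ^ 2)).
Proof.
  intros s_bounds.
  unfold log_series. rewrite sum_n_switch.
  apply Rle_trans with (sum_n (fun j => s / (1 - s ^ 2) * / INR (S j) ^ 2) J).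
  - apply sum_n_m_le. intros j.
    assert (Sj_pos : 0 < INR (S j)) by (apply lt_0_INR; lia).
    rewrite (sum_n_ext _ (fun k => / INR (S j) * (s ^ (2 * k + 1)) ^ S j))
      by (intros; apply Rmult_comm).
    rewrite (sum_n_mult_l (/ INR (S j)) (fun k => (s ^ (2 * k + 1)) ^ S j)).
    replace (s / (1 - s ^ 2) * / INR (S j) ^ 2) with (/ INR (S j) * (s / (INR (S j) * (1 - s ^ 2))))
      by (field; split; nra).
    apply Rmult_le_compat_l; [apply Rlt_le, Rinv_0_lt_compat; lra|].
    apply odd_pow_sum_le; [lra | lia].
  - rewrite (sum_n_mult_l (s / (1 - s ^ 2)) (fun j => / INR (S j) ^ 2)).
    change (mult ?a ?b) with (a * b). rewrite (Rmult_comm (PI ^ 2 / 6)).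
    apply Rmult_le_compat_l; [apply Rdiv_le_0_compat; nra | apply sum_inv_sq_le].
Qed.

Lemma sum_neg_ln_one_minus_odd_pow_le s M : 0 < s < 1 ->
  sum_n (fun k => - ln (1 - s ^ (2 * k + 1))) M <= PI ^ 2 / 6 * (s / (1 - s ^ 2)).
Proof.
  intros s_bounds.
  assert (odd_pow_bounds : forall k, 0 < s ^ (2 * k + 1) <= s).
  { intros k. rewrite pow_add, pow_1.
    assert (0 < s ^ (2 * k)) by (apply pow_lt; lra).
    assert (s ^ (2 * k) <= 1) by (rewrite <- (pow1 (2 * k)); apply pow_incr; lra). nra. }
  apply (le_of_le_add_geom _ _ (INR (S M) / (1 - s)) s); [lra|]. intros J.
  apply Rle_trans with (sum_n (fun k => plus (log_series J (s ^ (2 * k + 1)))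
    ((s ^ (2 * k + 1)) ^ S (S J) / (INR (S (S J)) * (1 - s ^ (2 * k + 1))))) M).
  { apply sum_n_m_le. intros k. apply neg_ln_one_minus_le. pose proof (odd_pow_bounds k). lra. }
  rewrite sum_n_plus. change (plus ?a ?b) with (a + b).
  apply Rplus_le_compat; [apply sum_log_series_odd_pow_le; lra|].
  apply Rle_trans with (sum_n (fun _ => s ^ J / (1 - s)) M).
  2: { rewrite sum_n_const. right. field. lra. }
  apply sum_n_m_le. intros k. set (x := s ^ (2 * k + 1)).
  assert (x_bounds : 0 < x <= s) by apply odd_pow_bounds.
  assert (SSJ_ge1 : 1 <= INR (S (S J))) by (apply (le_INR 1); lia).
  assert (xpow_le : x ^ S (S J) <= s ^ J).
  { change (x * (x * x ^ J) <= s ^ J).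
    assert (x ^ J <= s ^ J) by (apply pow_incr; lra).
    assert (0 <= x ^ J) by (apply pow_le; lra).
    assert (x * x <= 1) by nra. nra. }
  unfold Rdiv. apply Rmult_le_compat; [apply pow_le; lra | apply Rlt_le, Rinv_0_lt_compat; nra | exact xpow_le |].
  apply Rinv_le_contravar; nra.
Qed.

Fixpoint odd_pochhammer (s : R) (K : nat) : R :=
  match K with
  | O => 1
  | S k => odd_pochhammer s k * (1 - s ^ (2 * k + 1))
  end.

Lemma odd_pochhammer_exp s M : 0 < s < 1 ->
  odd_pochhammer s (S M) = exp (- sum_n (fun k => - ln (1 - s ^ (2 * k + 1))) M).
Proof.
  intros s_bounds.
  assert (factor_pos : forall k, 0 < 1 - s ^ (2 * k + 1)).
  { intros k. assert (0 <= s ^ (2 * k + 1) < 1) by (apply pow_lt_1_compat; [lra | lia]). lra. }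
  induction M as [|M IHM].
  - rewrite sum_O. simpl odd_pochhammer. rewrite Ropp_involutive, exp_ln by apply factor_pos. simpl. ring.
  - rewrite sum_Sn. change (plus ?a ?b) with (a + b).
    change (odd_pochhammer s (S (S M))) with (odd_pochhammer s (S M) * (1 - s ^ (2 * S M + 1))).
    rewrite IHM, Ropp_plus_distr, exp_plus, Ropp_involutive, exp_ln by apply factor_pos. reflexivity.
Qed.

Lemma exp_le_exp_of_le x y : x <= y -> exp x <= exp y.
Proof. intros [lt | ->]; [left; apply exp_increasing | right]; auto. Qed.

Lemma odd_pochhammer_ge s K : 0 < s < 1 ->
  exp (- (PI ^ 2 / 6 * (s / (1 - s ^ 2)))) <= odd_pochhammer s K.
Proof.
  intros s_bounds. destruct K as [|M].
  - assert (0 <= PI ^ 2 / 6 * (s / (1 - s ^ 2))).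
    { apply Rmult_le_pos; [pose proof (pow2_ge_0 PI); lra | apply Rdiv_le_0_compat; nra]. }
    apply Rle_trans with (exp 0); [apply exp_le_exp_of_le; lra | rewrite exp_0; apply Rle_refl].
  - rewrite odd_pochhammer_exp by lra. apply exp_le_exp_of_le.
    apply Ropp_le_contravar, sum_neg_ln_one_minus_odd_pow_le; lra.
Qed.

Lemma cpow_add q a b : cpow q (a + b) = Cmult (cpow q a) (cpow q b).
Proof. induction a as [|a IHa]; simpl; [ring | rewrite IHa; ring]. Qed.

Lemma Cmod_cpow q m : Cmod (cpow q m) = Cmod q ^ m.
Proof. induction m as [|m IHm]; simpl; [apply Cmod_1 | rewrite Cmod_mult, IHm; reflexivity]. Qed.

Lemma partial_prod_add z q a b :
  partial_prod z q (a + b) = Cmult (partial_prod z q a) (partial_prod (Cmult z (cpow q a)) q b).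
Proof.
  induction b as [|b IHb]; simpl.
  - rewrite Nat.add_0_r. ring.
  - rewrite Nat.add_succ_r. simpl. rewrite IHb, cpow_add. ring.
Qed.

Lemma Cmod_one_plus_ge w : Cmod w - 1 <= Cmod (1 + w) /\ 1 - Cmod w <= Cmod (1 + w).
Proof.
  split.
  - pose proof (Cmod_triangle (1 + w)%C (- (1))%C) as tri. rewrite Cmod_m1 in tri.
    replace (1 + w + - (1))%C with w in tri by ring. lra.
  - pose proof (Cmod_triangle (1 + w)%C (- w)%C) as tri. rewrite Cmod_opp in tri.
    replace (1 + w + - w)%C with (RtoC 1) in tri by ring. rewrite Cmod_1 in tri. lra.
Qed.

Section PartialProductBounds.

Variables (q : C) (s : R).
Hypothesis s_bounds : 0 < s < 1.
Hypothesis Cmod_q : Cmod q = s ^ 2.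

Let odd_pochhammer_nonneg K : 0 <= odd_pochhammer s K.
Proof.
  apply Rlt_le, Rlt_le_trans with (exp (- (PI ^ 2 / 6 * (s / (1 - s ^ 2))))).
  - apply exp_pos.
  - apply odd_pochhammer_ge, s_bounds.
Qed.

Let odd_factor_bounds k : 0 <= s ^ (2 * k + 1) < 1.
Proof. apply pow_lt_1_compat; [lra | lia]. Qed.

Lemma partial_prod_tail_ge z K :
  Cmod z <= / s -> odd_pochhammer s K <= Cmod (partial_prod z q K).
Proof.
  intros Cmod_z. induction K as [|K IHK].
  - simpl. rewrite Cmod_1. lra.
  - change (partial_prod z q (S K)) with (partial_prod z q K * (1 + z * cpow q (S K)))%C.
    change (odd_pochhammer s (S K)) with (odd_pochhammer s K * (1 - s ^ (2 * K + 1))).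
    rewrite Cmod_mult.
    assert (term_le : Cmod (z * cpow q (S K)) <= s ^ (2 * K + 1)).
    { rewrite Cmod_mult, Cmod_cpow, Cmod_q, <- pow_mult.
      replace (s ^ (2 * K + 1)) with (/ s * s ^ (2 * S K))
        by (replace (2 * S K)%nat with (S (2 * K + 1)) by lia; simpl; field; lra).
      apply Rmult_le_compat_r; [apply pow_le; lra | exact Cmod_z]. }
    destruct (Cmod_one_plus_ge (z * cpow q (S K))) as [_ factor_ge].
    pose proof (odd_factor_bounds K).
    apply Rmult_le_compat; [apply odd_pochhammer_nonneg | lra | exact IHK | lra].
Qed.

Lemma partial_prod_head_ge n : forall z,
  Cmod z = / s ^ (2 * n + 1) -> / s ^ (n * n) * odd_pochhammer s n <= Cmod (partial_prod z q n).
Proof.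
  induction n as [|n IHn]; intros z Cmod_z.
  - simpl. rewrite Cmod_1. lra.
  - change (partial_prod z q (S n)) with (partial_prod z q (1 + n)).
    rewrite partial_prod_add, Cmod_mult.
    assert (shifted : Cmod (z * cpow q 1) = / s ^ (2 * n + 1)).
    { rewrite Cmod_mult, Cmod_cpow, Cmod_z, Cmod_q, pow_1.
      replace (2 * S n + 1)%nat with (2 * n + 1 + 2)%nat by lia. rewrite pow_add. field.
      split; [apply pow_nonzero|]; lra. }
    assert (first_ge : / s ^ (2 * n + 1) * (1 - s ^ (2 * n + 1)) <= Cmod (partial_prod z q 1)).
    { destruct (Cmod_one_plus_ge (z * cpow q 1)) as [factor_ge _].
      change (partial_prod z q 1) with (1 * (1 + z * cpow q 1))%C.
      rewrite Cmult_1_l. rewrite shifted in factor_ge.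
      replace (/ s ^ (2 * n + 1) * (1 - s ^ (2 * n + 1))) with (/ s ^ (2 * n + 1) - 1); [lra|].
      field. apply pow_nonzero; lra. }
    replace (/ s ^ (S n * S n) * odd_pochhammer s (S n))
      with (/ s ^ (2 * n + 1) * (1 - s ^ (2 * n + 1)) * (/ s ^ (n * n) * odd_pochhammer s n)).
    2: { replace (S n * S n)%nat with (2 * n + 1 + n * n)%nat by lia.
         change (odd_pochhammer s (S n)) with (odd_pochhammer s n * (1 - s ^ (2 * n + 1))).
         rewrite (pow_add s (2 * n + 1) (n * n)). field. split; apply pow_nonzero; lra. }
    pose proof (odd_factor_bounds n).
    assert (0 < / s ^ (2 * n + 1)) by (apply Rinv_0_lt_compat, pow_lt; lra).
    assert (0 < / s ^ (n * n)) by (apply Rinv_0_lt_compat, pow_lt; lra).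
    apply Rmult_le_compat; [nra | apply Rmult_le_pos; [lra | apply odd_pochhammer_nonneg] | exact first_ge |].
    apply IHn, shifted.
Qed.

Lemma partial_prod_ge z n K : Cmod z = / s ^ (2 * n + 1) ->
  / s ^ (n * n) * odd_pochhammer s n * odd_pochhammer s K <= Cmod (partial_prod z q (n + K)).
Proof.
  intros Cmod_z. rewrite partial_prod_add, Cmod_mult.
  assert (0 < / s ^ (n * n)) by (apply Rinv_0_lt_compat, pow_lt; lra).
  apply Rmult_le_compat;
    [apply Rmult_le_pos; [lra | apply odd_pochhammer_nonneg] | apply odd_pochhammer_nonneg
    | apply partial_prod_head_ge, Cmod_z |].
  apply partial_prod_tail_ge. rewrite Cmod_mult, Cmod_cpow, Cmod_z, Cmod_q, <- pow_mult.
  replace (2 * n + 1)%nat with (S (2 * n)) by lia. simpl. right. field. split; [lra | apply pow_nonzero; lra].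
Qed.

End PartialProductBounds.

Lemma is_inf_prod_Cmod_ge_of_partial_prod z q U c n :
  is_inf_prod z q U -> (forall K, c <= Cmod (partial_prod z q (n + K))) -> c <= Cmod U.
Proof.
  intros HU bound.
  assert (lim : is_lim_seq (fun N => Cmod (partial_prod z q N)) (Cmod U)).
  { eapply filterlim_comp; [exact HU | apply (filterlim_norm (K := C_AbsRing) (V := C_NormedModule))]. }
  apply (is_lim_seq_incr_n _ n) in lim.
  assert (le : forall K, c <= Cmod (partial_prod z q (K + n))) by (intros K; rewrite Nat.add_comm; apply bound).
  exact (is_lim_seq_le _ _ _ _ le (is_lim_seq_const c) lim).
Qed.

Lemma is_inf_prod_Cmod_ge q z U s n c : 0 < s < 1 -> Cmod q = s ^ 2 -> Cmod z = / s ^ (2 * n + 1) ->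
  PI ^ 2 / 6 * (s / (1 - s ^ 2)) <= c -> is_inf_prod z q U ->
  / s ^ (n * n) * exp (- c) * exp (- c) <= Cmod U.
Proof.
  intros s_bounds Cmod_q Cmod_z rate_le HU.
  assert (pochhammer_ge : forall K, exp (- c) <= odd_pochhammer s K).
  { intros K. eapply Rle_trans; [apply exp_le_exp_of_le, Ropp_le_contravar, rate_le|].
    apply odd_pochhammer_ge, s_bounds. }
  apply (is_inf_prod_Cmod_ge_of_partial_prod z q U _ n HU). intros K.
  eapply Rle_trans; [|apply (partial_prod_ge q s s_bounds Cmod_q z n K Cmod_z)].
  assert (0 < / s ^ (n * n)) by (apply Rinv_0_lt_compat, pow_lt; lra).
  pose proof (exp_pos (- c)).
  apply Rmult_le_compat; [nra | lra | apply Rmult_le_compat_l; [lra | apply pochhammer_ge] | apply pochhammer_ge].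
Qed.

Lemma Rpower_neg_half r k : 0 < r -> Rpower r (- INR k / 2) = / sqrt r ^ k.
Proof.
  intros r_pos.
  replace (- INR k / 2) with (- (/ 2 * INR k)) by field.
  rewrite Rpower_Ropp, <- Rpower_mult, Rpower_sqrt, Rpower_pow by (try apply sqrt_lt_R0; assumption).
  reflexivity.
Qed.

Lemma sqrt_div_one_minus_le r a : 1 < a -> 0 <= r <= 1 - 1 / a ->
  sqrt r / (1 - r) <= sqrt (a * (a - 1)).
Proof.
  intros a_gt1 r_bounds.
  assert (w_ge : 0 <= a * (1 - r) - 1).
  { apply (Rmult_le_reg_r (/ a)); [apply Rinv_0_lt_compat; lra|].
    replace ((a * (1 - r) - 1) * / a) with (1 - r - 1 / a) by (field; lra). lra. }
  assert (w_pos : 0 < 1 - r) by nra.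
  apply Rsqr_incr_0_var; [|apply sqrt_pos].
  rewrite Rsqr_div', Rsqr_sqrt, Rsqr_sqrt by nra.
  apply (Rmult_le_reg_r (Rsqr (1 - r))); [unfold Rsqr; nra|].
  unfold Rdiv. rewrite Rmult_assoc, Rinv_l by (unfold Rsqr; nra). unfold Rsqr.
  (* [a (a - 1) w^2 - (1 - w) = (a w - 1) ((a - 1) w + 1)] with [w = 1 - r] *)
  assert (0 <= (a * (1 - r) - 1) * ((a - 1) * (1 - r) + 1)) by (apply Rmult_le_pos; nra).
  nra.
Qed.

Theorem lemma3 (alpha : R) (n : nat) (q z U : C)
  (Halpha : 0 < alpha) (Hn : (1 <= n)%nat) (Han : alpha * INR n > 1)
  (Hq0 : 0 < Cmod q) (Hq1 : Cmod q <= 1 - 1 / (alpha * INR n))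
  (Hz : Cmod z = Rpower (Cmod q) (- INR n - 1 / 2))
  (HU : is_inf_prod z q U) :
  Cmod U >= Rpower (Cmod q) (- (INR n ^ 2) / 2)
            * exp (- (PI ^ 2 / 3) * sqrt (alpha * INR n * (alpha * INR n - 1))).
Proof.
  set (r := Cmod q) in *. set (a := alpha * INR n) in *. set (s := sqrt r).
  assert (s_bounds : 0 < s < 1).
  { assert (0 < 1 / a) by (apply Rdiv_lt_0_compat; lra).
    split; [apply sqrt_lt_R0 | rewrite <- sqrt_1; apply sqrt_lt_1_alt]; lra. }
  assert (Cmod_q : Cmod q = s ^ 2) by (symmetry; apply pow2_sqrt, Rlt_le, Hq0).
  assert (Cmod_z : Cmod z = / s ^ (2 * n + 1)).
  { rewrite Hz. unfold s. rewrite <- Rpower_neg_half by lra. f_equal. rewrite plus_INR, mult_INR. simpl. field. }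
  replace (Rpower r (- (INR n ^ 2) / 2)) with (/ s ^ (n * n))
    by (unfold s; rewrite <- Rpower_neg_half, mult_INR by lra; f_equal; simpl; field).
  replace (- (PI ^ 2 / 3) * sqrt (a * (a - 1)))
    with (- (PI ^ 2 / 6 * sqrt (a * (a - 1))) + - (PI ^ 2 / 6 * sqrt (a * (a - 1)))) by field.
  rewrite exp_plus, <- Rmult_assoc. apply Rle_ge, (is_inf_prod_Cmod_ge q z U s n); auto.
  apply Rmult_le_compat_l; [pose proof (pow2_ge_0 PI); lra|].
  rewrite <- Cmod_q. apply sqrt_div_one_minus_le; [exact Han | split; [apply Cmod_ge_0 | exact Hq1]].
Qed.
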